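(* Let $a_1,\dots,a_n\in\mathbb{F}$ and $r_1,\dots,r_n\in\mathbb{Z}_+$ be such that $\Omega=\{(x-a_1)^{r_1},\dots,(x-a_n)^{r_n}\}$ has size $n$ and is P-independent. Then there exist $\beta_{i,j}\in\mathbb{F}^*$, for $j=1,\dots,r_i$ and $i=1,\dots,n$, such that for all such $i,j$, setting $\Omega_{i,j}=\{(x-a_1)^{r_1},\dots,(x-a_{i-1})^{r_{i-1}},(x-a_i)^j\}$, $$F_{\Omega_{i,j}}=(x-a_i^{\beta_{i,j}})\cdots(x-a_i^{\beta_{i,1}})(x-a_{i-1}^{\beta_{i-1,r_{i-1}}})\cdots(x-a_{i-1}^{\beta_{i-1,1}})\cdots(x-a_1^{\beta_{1,r_1}})\cdots(x-a_1^{\beta_{1,1}}).$$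
   Context: Let $\mathbb{F}$ be a division ring, $\sigma$ a ring endomorphism of $\mathbb{F}$ and $\delta$ a $\sigma$-derivation; $\mathbb{F}[x;\sigma,\delta]$ is the skew polynomial ring with $xa=\sigma(a)x+\delta(a)$. For $a\in\mathbb{F}$, $\beta\in\mathbb{F}^*$, the $(\sigma,\delta)$-conjugate is $a^\beta=\sigma(\beta)a\beta^{-1}+\delta(\beta)\beta^{-1}$. For a set $\Omega$ of skew polynomials, $I(\Omega)$ is the left ideal of skew polynomials right-divisible by every element of $\Omega$ and $F_\Omega$ its monic generator of minimal degree (or $0$). $\Omega$ is P-independent if it is finite, $I(\Omega)\ne\{0\}$ and $\deg F_\Omega=\sum_{P\in\Omega}\deg P$. *)

(* Skew polynomials F[x; sigma, delta] over a division ring F,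
   represented by their (left) coefficient sequences, stored in {poly F}
   (only the additive structure / coefficients of {poly F} are used; the
   multiplication is the skew one, [skmul], defined below). *)
From HB Require Import structures.
From mathcomp Require Import all_boot all_order all_algebra.
From Stdlib Require Import ClassicalEpsilon.
Set Implicit Arguments. Unset Strict Implicit. Unset Printing Implicit Defensive.
Import Order.TTheory GRing.Theory.
Local Open Scope ring_scope.

Section Skew.
Variable F : unitRingType.
Variable sigma : F -> F.
Variable delta : F -> F.

(* left multiplication by x:  x * (sum p_i x^i) = sum (sigma p_i x^(i+1) + delta p_i x^i) *)
Definition skmulX (p : {poly F}) : {poly F} :=
  \poly_(i < (size p).+1)
     ((if i is k.+1 then sigma p`_k else 0) + delta p`_i).

(* skew product: (sum p_i x^i) * q = sum p_i (x^i q); p_i *: _ scales coefficients on the left *)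
Definition skmul (p q : {poly F}) : {poly F} :=
  \sum_(i < size p) p`_i *: iter i skmulX q.

Definition skpow (p : {poly F}) (r : nat) : {poly F} := iter r (skmul p) 1.

Definition rdivides (q p : {poly F}) : Prop := exists s : {poly F}, p = skmul s q.

Definition Iset (Om : seq {poly F}) (p : {poly F}) : Prop :=
  forall q, q \in Om -> rdivides q p.

Definition is_Fgen (Om : seq {poly F}) (G : {poly F}) : Prop :=
  (Iset Om G /\ G \is monic /\
     forall p, Iset Om p -> p != 0 -> (size G <= size p)%N)
  \/ (G = 0 /\ forall p, Iset Om p -> p = 0).

Definition F_Omega (Om : seq {poly F}) : {poly F} :=
  epsilon (inhabits 0) (is_Fgen Om).

Definition skdeg (p : {poly F}) : nat := (size p).-1.

Definition P_independent (Om : seq {poly F}) : Prop :=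
  uniq Om /\ (exists p, Iset Om p /\ p != 0) /\
  skdeg (F_Omega Om) = (\sum_(q <- Om) skdeg q)%N.

Definition conj (a beta : F) : F :=
  sigma beta * a * beta^-1 + delta beta * beta^-1.

Definition xsub (a : F) : {poly F} := 'X - a%:P.

(* product of the list from right to left: [f1; f2; ...; fm] |-> fm * ... * f2 * f1 *)
Definition skprod_rev (fs : seq {poly F}) : {poly F} :=
  foldl (fun acc f => skmul f acc) 1 fs.

End Skew.

(* Everything rests on one local step
   (extend_by_conjugate): if G lies in I(Pre, (x-c)^j), write G = H (x-c)^j and
   H = Q (x-c) + h with h a constant; either h = 0 and G already lies in
   I(Pre, (x-c)^(j+1)), or h <> 0 and the identity (x - c^h) h = sigma(h) (x-c)
   puts (x - c^h) G there.  So each added factor raises deg F_Omega by at most one,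
   and when it raises it by exactly one, F_Omega acquires the left factor x - c^h.
   Along Omega_(0,0), ..., Omega_(n-1,r_(n-1)) the degree therefore grows by at most
   one per step, while P-independence says the final degree equals the number of
   steps; hence every step is tight (chain_tight) and the beta_(i,j) are read off. *)

From HB Require Import structures.
From mathcomp Require Import all_boot all_order all_algebra zify.
From Stdlib Require Import ClassicalEpsilon Classical.

Import GRing.Theory.

Lemma chain_bound {f w : nat -> nat} {m : nat} :
  (forall k, k < m -> f k.+1 <= f k + w k) ->
  f m <= f 0 + \sum_(0 <= k < m) w k.
Proof.
elim: m => [|m IH] step; first by rewrite big_geq ?addn0.
rewrite big_nat_recr //= addnA.
apply: leq_trans (step m (ltnSn m)) _; rewrite leq_add2r.
by apply: IH => k hk; apply: step; apply: ltnW.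
Qed.

Lemma chain_tight {f w : nat -> nat} {m : nat} :
  (forall k, k < m -> f k.+1 <= f k + w k) ->
  f m = f 0 + \sum_(0 <= k < m) w k ->
  forall k, k < m -> f k.+1 = f k + w k.
Proof.
elim: m => [|m IH] step fm k hk //.
have step' : forall k, k < m -> f k.+1 <= f k + w k.
  by move=> k' hk'; apply: step; apply: ltnW.
have bound_m := chain_bound step'.
have step_m := step m (ltnSn m).
rewrite big_nat_recr //= in fm.
move: hk; rewrite ltnS leq_eqVlt => /orP [/eqP -> | hk]; first by lia.
by apply: IH => //; lia.
Qed.

Lemma guarded_choice2 {T : Type} (x0 : T) {A B : nat -> nat -> Prop}
    {P : nat -> nat -> T -> Prop} :
  (forall i j, A i j -> B i j -> exists x, P i j x) ->
  exists f : nat -> nat -> T, forall i j, A i j -> B i j -> P i j (f i j).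
Proof.
move=> ex; exists (fun i j => epsilon (inhabits x0) (P i j)) => i j Aij Bij.
exact: epsilon_spec (ex i j Aij Bij).
Qed.

Lemma ex_minimal {T : Type} (mu : T -> nat) {P : T -> Prop} :
  (exists x, P x) -> exists x, P x /\ forall y, P y -> mu x <= mu y.
Proof.
move=> [x Px]; move: {2}(mu x) (erefl (mu x)) => k.
elim/ltn_ind: k x Px => k IH x Px ekx.
case: (classic (exists y, P y /\ mu y < mu x)) => [[y [Py lt_yx]] | none].
  by apply: (IH (mu y) _ y Py); rewrite // -ekx.
exists x; split => // y Py; rewrite leqNgt; apply/negP => lt_yx.
by apply: none; exists y.
Qed.

Lemma iota_rcons m k : iota m k.+1 = iota m k ++ [:: m + k].
Proof. by rewrite -addn1 iotaD. Qed.

Lemma sum_ones m : \sum_(0 <= k < m) 1 = m.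
Proof. by rewrite sum_nat_const_nat subn0 muln1. Qed.

Local Open Scope ring_scope.

Section SkewPolynomials.
Context {F : unitRingType} {sigma : {rmorphism F -> F}} {delta : F -> F}.
Hypothesis delta_add : forall b c : F, delta (b + c) = delta b + delta c.
Hypothesis delta_mul : forall b c : F, delta (b * c) = sigma b * delta c + delta b * c.

Local Notation mulX := (skmulX sigma delta).
Local Notation smul := (skmul sigma delta).

Lemma delta0 : delta 0 = 0.
Proof.
have h := delta_add 0 0; rewrite addr0 in h.
by apply: (addIr (delta 0)); rewrite add0r -h.
Qed.

Lemma delta1 : delta 1 = 0.
Proof.
have h := delta_mul 1 1; rewrite !mulr1 rmorph1 mul1r in h.
by apply: (addIr (delta 1)); rewrite add0r -h.
Qed.

Lemma coef_mulX (p : {poly F}) k :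
  (mulX p)`_k = (if k is k'.+1 then sigma p`_k' else 0) + delta p`_k.
Proof.
rewrite /skmulX coef_poly; case: ltnP => // Hk.
rewrite nth_default; last exact: leq_trans Hk.
case: k Hk => [|k] Hk; first by rewrite delta0 addr0.
by rewrite nth_default // rmorph0 delta0 addr0.
Qed.

Lemma mulXD (p q : {poly F}) : mulX (p + q) = mulX p + mulX q.
Proof.
apply/polyP => k; rewrite coefD !coef_mulX !coefD delta_add.
case: k => [|k]; first by rewrite !add0r.
by rewrite coefD rmorphD addrACA.
Qed.

Lemma mulX0 : mulX 0 = 0.
Proof.
apply/polyP => k; rewrite coef_mulX !coef0 delta0 addr0.
by case: k => [|k] //; rewrite coef0 rmorph0.
Qed.

Lemma mulXZ c (p : {poly F}) : mulX (c *: p) = sigma c *: mulX p + delta c *: p.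
Proof.
apply/polyP => k; rewrite coefD !coefZ !coef_mulX !coefZ delta_mul mulrDr addrA.
by case: k => [|k]; rewrite ?mulr0 ?add0r // coefZ rmorphM.
Qed.

(* x x^k = x^(k+1), because delta vanishes on the constants 0 and 1. *)
Lemma mulX_Xn k : mulX ('X^k : {poly F}) = 'X^(k.+1).
Proof.
apply/polyP => m; rewrite coef_mulX !coefXn.
have -> : delta (m == k)%:R = 0 by case: (m == k); rewrite ?delta1 ?delta0.
rewrite addr0; case: m => [|m] //=.
by rewrite coefXn rmorph_nat eqSS.
Qed.

Lemma iter_mulXD k (p q : {poly F}) : iter k mulX (p + q) = iter k mulX p + iter k mulX q.
Proof. by elim: k => //= k ->; rewrite mulXD. Qed.

Lemma smulE N (p q : {poly F}) : (size p <= N)%N ->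
  smul p q = \sum_(i < N) p`_i *: iter i mulX q.
Proof.
move=> hN; rewrite /skmul (big_ord_widen N (fun i => p`_i *: iter i mulX q)) //.
rewrite big_mkcond; apply: eq_bigr => i _; case: ltnP => // h.
by rewrite nth_default // scale0r.
Qed.

Lemma smulDl (p p' q : {poly F}) : smul (p + p') q = smul p q + smul p' q.
Proof.
set N := maxn (size p) (size p').
rewrite (@smulE N (p + p')); last exact: leq_trans (size_polyD _ _) _.
rewrite (@smulE N p) ?leq_maxl // (@smulE N p') ?leq_maxr // -big_split.
by apply: eq_bigr => i _; rewrite coefD scalerDl.
Qed.

Lemma smulZl c (p q : {poly F}) : smul (c *: p) q = c *: smul p q.
Proof.
rewrite (@smulE (size p) (c *: p)) ?size_scale_leq // /skmul scaler_sumr.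
by apply: eq_bigr => i _; rewrite coefZ scalerA.
Qed.

Lemma smul0l (q : {poly F}) : smul 0 q = 0.
Proof. by rewrite /skmul size_poly0 big_ord0. Qed.

Lemma smulBl (p p' q : {poly F}) : smul (p - p') q = smul p q - smul p' q.
Proof. by rewrite smulDl -scaleN1r smulZl scaleN1r. Qed.

Lemma smulDr (p q q' : {poly F}) : smul p (q + q') = smul p q + smul p q'.
Proof.
by rewrite /skmul -big_split; apply: eq_bigr => i _; rewrite iter_mulXD scalerDr.
Qed.

Lemma smulCl c (q : {poly F}) : smul c%:P q = c *: q.
Proof. by rewrite (@smulE 1) ?size_polyC ?leq_b1 // big_ord1 /= coefC. Qed.

Lemma smulXnl k (q : {poly F}) : smul 'X^k q = iter k mulX q.
Proof.
rewrite (@smulE k.+1) ?size_polyXn // big_ord_recr /= coefXn eqxx scale1r.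
by rewrite big1 ?add0r // => i _; rewrite coefXn (ltn_eqF (ltn_ord i)) scale0r.
Qed.

Lemma smul1r (p : {poly F}) : smul p 1 = p.
Proof.
have Xi i : iter i mulX 1 = 'X^i by elim: i => [|i IH] //=; rewrite IH mulX_Xn.
by rewrite /skmul; under eq_bigr => i _ do rewrite Xi; rewrite -poly_def coefK.
Qed.

Lemma smul_mulXl (v u : {poly F}) : smul (mulX v) u = mulX (smul v u).
Proof.
set m := size v.
rewrite (@smulE m.+1 (mulX v)); last by rewrite /skmulX size_poly.
rewrite (@smulE m.+1 v) // (big_morph mulX mulXD mulX0).
under [in LHS]eq_bigr => i _ do rewrite coef_mulX scalerDl.
under [in RHS]eq_bigr => i _ do rewrite mulXZ.
rewrite !big_split /=; congr (_ + _).
rewrite big_ord_recl /= scale0r add0r big_ord_recr /= nth_default // rmorph0.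
by rewrite scale0r addr0.
Qed.

Lemma smulA (p q u : {poly F}) : smul (smul p q) u = smul p (smul q u).
Proof.
have smul_iter k v : smul (iter k mulX v) u = iter k mulX (smul v u).
  by elim: k => //= k IH; rewrite smul_mulXl IH.
have -> : smul p q = \sum_(i < size p) p`_i *: iter i mulX q by [].
rewrite (big_morph (fun p => smul p u) (fun p p' => smulDl p p' u) (smul0l u)).
by apply: eq_bigr => i _; rewrite smulZl smul_iter.
Qed.

Local Notation pw c j := (skpow sigma delta (xsub c) j).

Lemma size_le_pred (p : {poly F}) k : (size p <= k.+1)%N -> p`_k = 0 -> (size p <= k)%N.
Proof.
move=> h1 h2; rewrite leqNgt; apply/negP => h.
have e : size p = k.+1 by apply/eqP; rewrite eqn_leq h1 h.
have : lead_coef p == 0 by rewrite /lead_coef e /= h2.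
by rewrite lead_coef_eq0 => /eqP p0; rewrite p0 size_poly0 in h.
Qed.

Lemma monic_of_coef (p : {poly F}) k : (size p <= k.+1)%N -> p`_k = 1 ->
  p \is monic /\ size p = k.+1.
Proof.
move=> h1 h2.
have e : size p = k.+1.
  apply/eqP; rewrite eqn_leq h1 /= ltnNge; apply/negP => h.
  by move: h2; rewrite nth_default // => /eqP; rewrite eq_sym oner_eq0.
by split => //; rewrite monicE /lead_coef e /= h2.
Qed.

Lemma mulX_monic {p : {poly F}} : p \is monic ->
  mulX p \is monic /\ size (mulX p) = (size p).+1.
Proof.
move=> m; apply: monic_of_coef; first by rewrite /skmulX size_poly.
have : (0 < size p)%N by rewrite size_poly_gt0 monic_neq0.
case e: (size p) => [|s] // _.
rewrite coef_mulX (nth_default 0 (_ : (size p <= s.+1)%N)) ?e // delta0 addr0.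
by move/monicP: m; rewrite /lead_coef e /= => ->; rewrite rmorph1.
Qed.

Lemma iter_mulX_monic k {p : {poly F}} : p \is monic ->
  iter k mulX p \is monic /\ size (iter k mulX p) = (size p + k)%N.
Proof.
move=> m; elim: k => [|k [m' e]] /=; first by rewrite addn0.
by have [-> ->] := mulX_monic m'; rewrite e addnS.
Qed.

Lemma smul_xsubl c (G : {poly F}) : smul (xsub c) G = mulX G - c *: G.
Proof. by rewrite /xsub smulBl -(expr1 'X) smulXnl smulCl. Qed.

Lemma smul_xsub_monic c {G : {poly F}} : G \is monic ->
  smul (xsub c) G \is monic /\ size (smul (xsub c) G) = (size G).+1.
Proof.
move=> m; have [mX eX] := mulX_monic m.
rewrite smul_xsubl; apply: monic_of_coef.
  apply: leq_trans (size_polyD _ _) _; rewrite size_polyN geq_max -eX leqnn /=.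
  by rewrite (leq_trans (size_scale_leq _ _)) // eX.
rewrite coefB coefZ (nth_default _ (leqnn _)) mulr0 subr0.
by move/monicP: mX; rewrite /lead_coef eX.
Qed.

Lemma skpow_monic c j : pw c j \is monic /\ size (pw c j) = j.+1.
Proof.
elim: j => [|j [m e]]; first by rewrite /= monic1 size_poly1.
by rewrite /skpow iterS -/(skpow _ _ _ j); have [-> ->] := smul_xsub_monic c m; rewrite e.
Qed.

(* Right Euclidean division by x - c: H = Q (x - c) + h with h a constant.
   By induction on the size: subtracting lc(H) x^d (x - c) lowers it. *)
Lemma right_division_xsub c (H : {poly F}) : exists Q h, H = smul Q (xsub c) + h%:P.
Proof.
elim: {H}(size H) {-2}H (leqnn (size H)) => [|k IH] H hs.
  by exists 0, 0; move: hs; rewrite size_poly_leq0 => /eqP ->; rewrite smul0l add0r.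
case: (ltnP (size H) k.+1) => hk; first exact: IH.
case: k IH hs hk => [|d] IH hs hk.
  by exists 0, H`_0; rewrite smul0l add0r -size1_polyC.
set cc := H`_d.+1.
have [mT eT] : iter d mulX (xsub c) \is monic /\ size (iter d mulX (xsub c)) = d.+2.
  have [m1 e1] := smul_xsub_monic c (monic1 F); rewrite smul1r in m1 e1.
  by have [-> ->] := iter_mulX_monic d m1; rewrite e1 size_poly1 add2n.
have : (size (H - cc *: iter d mulX (xsub c))%R <= d.+1)%N.
  apply: size_le_pred.
    apply: leq_trans (size_polyD _ _) _; rewrite size_polyN geq_max hs /=.
    by rewrite (leq_trans (size_scale_leq _ _)) // eT.
  rewrite coefB coefZ; move/monicP: mT; rewrite /lead_coef eT /= => ->.
  by rewrite mulr1 subrr.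
move/IH => [Q [h eq]]; exists (Q + cc *: 'X^d), h.
by rewrite smulDl smulZl smulXnl addrAC -eq subrK.
Qed.

Lemma conj_xsub_identity c (h : F) : h \is a GRing.unit ->
  smul (xsub (conj sigma delta c h)) h%:P = smul (sigma h)%:P (xsub c).
Proof.
move=> hu; rewrite smul_xsubl smulCl /xsub; apply/polyP => k.
rewrite coefB !coefZ coef_mulX !coefB coefX !coefC.
case: k => [|[|k]] /=.
- rewrite add0r /conj mulrDl mulrVK // mulrVK // sub0r mulrN.
  by rewrite opprD addrCA subrr addr0.
- by rewrite coefC /= delta0 !(mulr0, subr0, addr0, mulr1).
- by rewrite coefC /= rmorph0 delta0 !(mulr0, subr0, addr0, mulr1).
Qed.

Local Notation rdiv := (rdivides sigma delta).
Local Notation I := (Iset sigma delta).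
Local Notation FO := (F_Omega sigma delta).

Lemma rdiv_trans q p u : rdiv q p -> rdiv u q -> rdiv u p.
Proof. by move=> [s ->] [t ->]; exists (smul s t); rewrite smulA. Qed.

Lemma rdiv_mull w q p : rdiv q p -> rdiv q (smul w p).
Proof. by move=> [s ->]; exists (smul w s); rewrite smulA. Qed.

Lemma rdiv_sub q p p' : rdiv q p -> rdiv q p' -> rdiv q (p - p').
Proof. by move=> [s ->] [t ->]; exists (s - t); rewrite smulBl. Qed.

Lemma rdiv_scale c q p : rdiv q p -> rdiv q (c *: p).
Proof. by move=> [s ->]; exists (c *: s); rewrite smulZl. Qed.

Lemma rdiv1 p : rdiv 1 p.
Proof. by exists p; rewrite smul1r. Qed.

Lemma skpow_rdiv u j k : (j <= k)%N -> rdiv (skpow sigma delta u j) (skpow sigma delta u k).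
Proof.
move/subnK <-; elim: (k - j)%N => [|m IH].
  by exists 1; rewrite -polyC1 smulCl scale1r.
by rewrite addSn /skpow iterS; apply: rdiv_mull.
Qed.

Lemma Iset_cat1 Pre x p : I (Pre ++ [:: x]) p <-> I Pre p /\ rdiv x p.
Proof.
split=> [h | [h1 h2] q].
  by split=> [q qi|]; apply: h; rewrite mem_cat ?qi ?mem_seq1 ?eqxx ?orbT.
by rewrite mem_cat mem_seq1 => /orP [/h1 | /eqP ->].
Qed.

Lemma Iset_sub {Om p p'} : I Om p -> I Om p' -> I Om (p - p').
Proof. by move=> h h' q qi; apply: rdiv_sub; [apply: h | apply: h']. Qed.

Lemma Iset_scale Om c p : I Om p -> I Om (c *: p).
Proof. by move=> h q qi; apply: rdiv_scale; apply: h. Qed.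

Lemma Iset_mull Om w p : I Om p -> I Om (smul w p).
Proof. by move=> h q qi; apply: rdiv_mull; apply: h. Qed.

Definition ideal_nonzero (Om : seq {poly F}) : Prop := exists p, I Om p /\ p != 0.

Definition min_generator (Om : seq {poly F}) (G : {poly F}) : Prop :=
  I Om G /\ G \is monic /\ forall p, I Om p -> p != 0 -> (size G <= size p)%N.

(* Two monic minimal elements coincide: their difference lies in the ideal
   and has smaller degree. *)
Lemma min_generator_unique Om G1 G2 :
  min_generator Om G1 -> min_generator Om G2 -> G1 = G2.
Proof.
move=> [I1 [m1 min1]] [I2 [m2 min2]].
have e : size G1 = size G2.
  by apply/eqP; rewrite eqn_leq min1 ?monic_neq0 // min2 ?monic_neq0.
apply/eqP; rewrite -subr_eq0; apply/negP => nz.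
have := min1 _ (Iset_sub I1 I2) (introN idP nz).
have : (0 < size G1)%N by rewrite size_poly_gt0 monic_neq0.
case e1: (size G1) => [|k] // _.
have : (size (G1 - G2)%R <= k)%N.
  apply: size_le_pred.
    by apply: leq_trans (size_polyD _ _) _; rewrite size_polyN -e e1 maxnn.
  rewrite coefB; move/monicP: m1; rewrite /lead_coef e1 /= => ->.
  by move/monicP: m2; rewrite /lead_coef -e e1 /= => ->; rewrite subrr.
by move=> h1 h2; have := leq_trans h2 h1; rewrite ltnn.
Qed.

Hypothesis Fdiv : forall c : F, c != 0 -> c \is a GRing.unit.

(* Over a division ring a nonzero I(Omega) has a monic minimal element:
   normalize an element of minimal degree. *)
Lemma min_generator_exists {Om} : ideal_nonzero Om -> exists G, min_generator Om G.
Proof.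
move=> nz; have [q [[Iq q0] minq]] := ex_minimal (fun p : {poly F} => size p) nz.
have : (0 < size q)%N by rewrite size_poly_gt0.
case e: (size q) => [|k] // _.
have [mG eG] : (lead_coef q)^-1 *: q \is monic /\ size ((lead_coef q)^-1 *: q) = k.+1.
  apply: monic_of_coef; first by rewrite -e size_scale_leq.
  have lk : lead_coef q = q`_k by rewrite /lead_coef e.
  by rewrite coefZ -lk mulVr // Fdiv // lead_coef_eq0.
exists ((lead_coef q)^-1 *: q); split; first exact: Iset_scale.
by split=> // p Ip p0; rewrite eG -e; apply: minq.
Qed.

Lemma F_Omega_spec {Om} : ideal_nonzero Om -> min_generator Om (FO Om).
Proof.
move=> nz; have [G hG] := min_generator_exists nz.
have := epsilon_spec (inhabits 0) (is_Fgen sigma delta Om).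
rewrite -/(F_Omega sigma delta Om) => spec.
case: (spec (ex_intro _ G (or_introl hG))) => // [[_ zero]].
by have [p [Ip]] := nz; rewrite (zero p Ip) eqxx.
Qed.

Lemma F_Omega_ext A B : (forall p, I A p <-> I B p) -> ideal_nonzero A -> FO A = FO B.
Proof.
move=> eqAB nzA.
have nzB : ideal_nonzero B by have [p [Ip p0]] := nzA; exists p; split=> //; apply/eqAB.
apply: (@min_generator_unique B); last exact: F_Omega_spec.
have [IA [mA minA]] := F_Omega_spec nzA.
by split; [apply/eqAB | split=> // p Ip p0; apply: minA => //; apply/eqAB].
Qed.

Lemma F_Omega_nil : FO [::] = 1.
Proof.
apply: (@min_generator_unique [::]).
  by apply: F_Omega_spec; exists 1; split; [by [] | exact: oner_neq0].
by split=> //; split=> [|p _ p0]; rewrite ?monic1 // size_poly1 size_poly_gt0.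
Qed.

Lemma Iset_skpow_down Pre c j p : I (Pre ++ [:: pw c j.+1]) p -> I (Pre ++ [:: pw c j]) p.
Proof.
move/Iset_cat1 => [h1 h2]; apply/Iset_cat1; split=> //.
by apply: rdiv_trans h2 _; apply: skpow_rdiv.
Qed.

Lemma ideal_nonzero_down {Pre c j} :
  ideal_nonzero (Pre ++ [:: pw c j.+1]) -> ideal_nonzero (Pre ++ [:: pw c j]).
Proof. by move=> [p [Ip p0]]; exists p; split=> //; apply: Iset_skpow_down. Qed.

Lemma F_Omega_skpow0 Pre c : ideal_nonzero Pre -> FO (Pre ++ [:: pw c 0]) = FO Pre.
Proof.
move=> [p [Ip p0]]; apply: F_Omega_ext.
  by move=> q; split=> [/Iset_cat1 [] // | Iq]; apply/Iset_cat1; split=> //; apply: rdiv1.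
by exists p; split=> //; apply/Iset_cat1; split=> //; apply: rdiv1.
Qed.

(* Key step: if G lies in I(Pre, (x-c)^j) then either G already lies in
   I(Pre, (x-c)^(j+1)), or (x - c^h) G does for some h <> 0.  Write
   G = H (x-c)^j and H = Q (x-c) + h; the conjugation identity turns
   (x - c^h) h into sigma(h) (x - c). *)
Lemma extend_by_conjugate {Pre c j G} : I (Pre ++ [:: pw c j]) G ->
  I (Pre ++ [:: pw c j.+1]) G \/
  exists h, h != 0 /\ I (Pre ++ [:: pw c j.+1]) (smul (xsub (conj sigma delta c h)) G).
Proof.
move/Iset_cat1 => [IP [H eG]].
have [Q [h eH]] := right_division_xsub c H.
have pwS : pw c j.+1 = smul (xsub c) (pw c j) by [].
case: (eqVneq h 0) => [h0 | hn0].
  left; apply/Iset_cat1; split=> //; exists Q.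
  by rewrite eG eH h0 addr0 pwS smulA.
right; exists h; split=> //; apply/Iset_cat1; split; first exact: Iset_mull.
set c' := conj sigma delta c h.
exists (smul (xsub c') Q + (sigma h)%:P).
rewrite pwS -smulA smulDl -conj_xsub_identity ?Fdiv // -/c'.
by rewrite smulA -smulDr -eH eG smulA.
Qed.

Lemma F_Omega_step_le Pre c j : ideal_nonzero (Pre ++ [:: pw c j.+1]) ->
  (size (FO (Pre ++ [:: pw c j.+1])) <= size (FO (Pre ++ [:: pw c j])) + 1)%N.
Proof.
move=> nzB; have [IA [mA _]] := F_Omega_spec (ideal_nonzero_down nzB).
have [_ [_ minB]] := F_Omega_spec nzB.
rewrite addn1; case: (extend_by_conjugate IA) => [IBG | [h [_ IBC]]].
  exact: leq_trans (minB _ IBG (monic_neq0 mA)) _.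
have [mC <-] := smul_xsub_monic (conj sigma delta c h) mA.
exact: minB IBC (monic_neq0 mC).
Qed.

Lemma F_Omega_step_conj Pre c j : ideal_nonzero (Pre ++ [:: pw c j.+1]) ->
  size (FO (Pre ++ [:: pw c j.+1])) = (size (FO (Pre ++ [:: pw c j])) + 1)%N ->
  exists h, h != 0 /\
    FO (Pre ++ [:: pw c j.+1]) = smul (xsub (conj sigma delta c h)) (FO (Pre ++ [:: pw c j])).
Proof.
move=> nzB eS; have [IA [mA _]] := F_Omega_spec (ideal_nonzero_down nzB).
have [IB [mB minB]] := F_Omega_spec nzB.
rewrite addn1 in eS; case: (extend_by_conjugate IA) => [IBG | [h [hn0 IBC]]].
  by have := minB _ IBG (monic_neq0 mA); rewrite eS ltnn.
exists h; split=> //.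
have [mC eC] := smul_xsub_monic (conj sigma delta c h) mA.
apply: (@min_generator_unique (Pre ++ [:: pw c j.+1])); first exact: F_Omega_spec.
by split=> //; split=> // p Ip p0; rewrite eC -eS; apply: minB.
Qed.

Lemma skprod_rev_rcons s f : skprod_rev sigma delta (s ++ [:: f]) = smul f (skprod_rev sigma delta s).
Proof. by rewrite /skprod_rev cats1 foldl_rcons. Qed.

Section Factorization.
Context {n : nat} {a : nat -> F} {r : nat -> nat}.

Definition prefix (i : nat) : seq {poly F} := [seq pw (a k) (r k) | k <- iota 0 i].
Definition family (i j : nat) : seq {poly F} := prefix i ++ [:: pw (a i) j].

Lemma prefixS i : prefix i.+1 = family i (r i).
Proof. by rewrite /prefix iota_rcons map_cat. Qed.

Hypothesis Hind : P_independent sigma delta (prefix n).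

(* All the families below Omega_n have a nonzero ideal, since I(Omega_n) <= I(Omega_(i,j)). *)
Lemma ideal_nonzero_prefix {i} : (i <= n)%N -> ideal_nonzero (prefix i).
Proof.
have [_ [[p [Ip p0]] _]] := Hind; move=> le_in; exists p; split=> // q.
move=> /mapP [k]; rewrite mem_iota add0n => /andP [_ lt_ki] ->.
by apply: Ip; apply/mapP; exists k; rewrite // mem_iota add0n (leq_trans lt_ki).
Qed.

Lemma ideal_nonzero_family i j : (i < n)%N -> (j <= r i)%N -> ideal_nonzero (family i j).
Proof.
move=> lt_in le_jr; have [p [Ip p0]] := ideal_nonzero_prefix lt_in.
exists p; split=> //; move: Ip; rewrite prefixS.
elim: (r i) le_jr => [|m IH]; first by rewrite leqn0 => /eqP ->.
by rewrite leq_eqVlt => /orP [/eqP -> // | /IH IHm /Iset_skpow_down].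
Qed.

Lemma size_F_prefix_total :
  size (FO (prefix n)) = (size (FO (prefix 0)) + \sum_(0 <= k < n) r k)%N.
Proof.
have [_ [_ deg_n]] := Hind.
have [_ [mF _]] := F_Omega_spec (ideal_nonzero_prefix (leqnn n)).
rewrite /prefix /= F_Omega_nil size_poly1 add1n.
rewrite -(prednK (_ : 0 < size (FO _))%N) ?size_poly_gt0 ?monic_neq0 //.
congr _.+1; rewrite [LHS]deg_n big_map /index_iota subn0.
by apply: eq_bigr => k _; rewrite /skdeg (skpow_monic (a k) (r k)).2.
Qed.

Lemma size_F_family_step i j : (i < n)%N -> (j < r i)%N ->
  (size (FO (family i j.+1)) <= size (FO (family i j)) + 1)%N.
Proof. by move=> lt_in lt_jr; apply: F_Omega_step_le; apply: ideal_nonzero_family. Qed.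

Lemma F_family0 i : (i <= n)%N -> FO (family i 0) = FO (prefix i).
Proof. by move=> le_in; apply: F_Omega_skpow0; apply: ideal_nonzero_prefix. Qed.

(* Passing from Omega_i to Omega_(i+1) raises the degree by exactly r_i:
   at most r_i by the step bound, and the total is attained. *)
Lemma size_F_prefixS i : (i < n)%N ->
  size (FO (prefix i.+1)) = (size (FO (prefix i)) + r i)%N.
Proof.
have outer_step k : (k < n)%N -> (size (FO (prefix k.+1)) <= size (FO (prefix k)) + r k)%N.
  move=> lt_kn; rewrite prefixS -F_family0 ?(ltnW lt_kn) // -{2}(sum_ones (r k)).
  apply: (@chain_bound (fun j => size (FO (family k j))) (fun=> 1%N)) => j lt_jr.
  exact: size_F_family_step.
exact: (@chain_tight (fun k => size (FO (prefix k))) r n outer_step size_F_prefix_total i).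
Qed.

Lemma size_F_familyS i j : (i < n)%N -> (j < r i)%N ->
  size (FO (family i j.+1)) = (size (FO (family i j)) + 1)%N.
Proof.
move=> lt_in.
apply: (@chain_tight (fun j => size (FO (family i j))) (fun=> 1%N) (r i)).
  by move=> k; apply: size_F_family_step.
by rewrite sum_ones -prefixS F_family0 ?(ltnW lt_in) // size_F_prefixS.
Qed.

Lemma conjugates_exist : exists beta : nat -> nat -> F,
  forall i j, (i < n)%N -> (1 <= j <= r i)%N -> beta i j != 0 /\
    FO (family i j) = smul (xsub (conj sigma delta (a i) (beta i j))) (FO (family i j.-1)).
Proof.
have step : forall i j, (i < n)%N -> (1 <= j <= r i)%N -> exists h, h != 0 /\
    FO (family i j) = smul (xsub (conj sigma delta (a i) h)) (FO (family i j.-1)).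
  move=> i [|j] lt_in //= lt_jr.
  apply: F_Omega_step_conj; first exact: ideal_nonzero_family.
  exact: size_F_familyS.
exact (guarded_choice2 0 step).
Qed.

Context {beta : nat -> nat -> F}.
Hypothesis Hbeta : forall i j, (i < n)%N -> (1 <= j <= r i)%N ->
  FO (family i j) = smul (xsub (conj sigma delta (a i) (beta i j))) (FO (family i j.-1)).

Definition factors_before (i : nat) : seq {poly F} :=
  [seq xsub (conj sigma delta (a k) (beta k l)) | k <- iota 0 i, l <- iota 1 (r k)].
Definition factors_in (i j : nat) : seq {poly F} :=
  [seq xsub (conj sigma delta (a i) (beta i l)) | l <- iota 1 j].

Lemma F_family_prod i j : (i < n)%N ->
  FO (prefix i) = skprod_rev sigma delta (factors_before i) -> (j <= r i)%N ->
  FO (family i j) = skprod_rev sigma delta (factors_before i ++ factors_in i j).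
Proof.
move=> lt_in F_pre; elim: j => [|j IH] le_jr.
  by rewrite F_family0 ?(ltnW lt_in) // cats0.
rewrite (Hbeta _ _ lt_in) /=; last by rewrite le_jr.
rewrite IH ?(ltnW le_jr) // -skprod_rev_rcons -catA.
by rewrite /factors_in iota_rcons map_cat add1n.
Qed.

Lemma F_prefix_prod i : (i <= n)%N -> FO (prefix i) = skprod_rev sigma delta (factors_before i).
Proof.
elim: i => [|i IH] le_in; first by rewrite /= F_Omega_nil.
rewrite prefixS F_family_prod ?IH ?(ltnW le_in) //.
by rewrite /factors_before iota_rcons allpairs_cat /= cats0.
Qed.

End Factorization.
End SkewPolynomials.

(* Theorem 6: choose the beta_(i,j) step by step, then multiply out. *)
Theorem mainTheorem6
  (F : unitRingType)
  (Fdiv : forall c : F, c != 0 -> c \is a GRing.unit)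
  (sigma : {rmorphism F -> F})
  (delta : F -> F)
  (delta_add : forall b c : F, delta (b + c) = delta b + delta c)
  (delta_mul : forall b c : F, delta (b * c) = sigma b * delta c + delta b * c)
  (n : nat) (a : nat -> F) (r : nat -> nat)
  (r_pos : forall i, (i < n)%N -> (0 < r i)%N)
  (Hind : P_independent sigma delta
            [seq skpow sigma delta (xsub (a i)) (r i) | i <- iota 0 n]) :
  exists beta : nat -> nat -> F,
    (forall i j, (i < n)%N -> (1 <= j <= r i)%N -> beta i j != 0) /\
    (forall i j, (i < n)%N -> (1 <= j <= r i)%N ->
       F_Omega sigma delta
         ([seq skpow sigma delta (xsub (a k)) (r k) | k <- iota 0 i]
            ++ [:: skpow sigma delta (xsub (a i)) j])
       = skprod_rev sigma delta
           ([seq xsub (conj sigma delta (a k) (beta k l))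
               | k <- iota 0 i, l <- iota 1 (r k)]
            ++ [seq xsub (conj sigma delta (a i) (beta i l)) | l <- iota 1 j])).
Proof.
have [beta Hbeta] := conjugates_exist delta_add delta_mul Fdiv Hind.
have Hstep i j (lt_in : (i < n)%N) (hj : (1 <= j <= r i)%N) := (Hbeta i j lt_in hj).2.
exists beta; split=> [i j lt_in hj | i j lt_in /andP [_ le_jr]].
  by have [] := Hbeta i j lt_in hj.
apply: (F_family_prod delta_add delta_mul Fdiv Hind Hstep _ _ lt_in) => //.
exact: (F_prefix_prod delta_add delta_mul Fdiv Hind Hstep _ (ltnW lt_in)).
Qed.
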